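(* Let $\gamma$ be the boundary of a magnetic billiard with field magnitude $\beta>0$ having the $\delta$-Gutkin property, where $\gamma$ is parametrized by the angle $\varphi$ of its tangent vector with a fixed direction, so that, identifying $\mathbb{R}^2$ with $\mathbb{C}$, $\frac{d\gamma}{d\varphi}=\rho(\varphi)e^{i\varphi}$ with $\rho$ the radius of curvature. Suppose $d$ is a function such that for every $\bar\varphi$ the Larmor arc (circle of radius $1/\beta$ traversed counterclockwise) inside $\Omega$ that starts at $\gamma(\bar\varphi+d(\bar\varphi))$ making angle $\delta$ with $\gamma$ (velocity $e^{i(\bar\varphi+d(\bar\varphi)+\delta)}$) ends at $\gamma(\bar\varphi-d(\bar\varphi))$ making angle $\delta$ with $\gamma$ (velocity $e^{i(\bar\varphi-d(\bar\varphi)-\delta)}$), its velocity angle increasing from $\bar\varphi+d+\delta$ to $\bar\varphi-d+2\pi-\delta$. Then for every $\bar\varphi$ $$\int_{\bar\varphi-d(\bar\varphi)}^{\bar\varphi+d(\bar\varphi)}\rho(\xi)e^{i\xi}\,d\xi=\frac{2}{\beta}\sin\big(\delta+d(\bar\varphi)\big)e^{i\bar\varphi}.$$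
   Context: Magnetic billiard in a domain $\Omega$ with boundary $\gamma$: a particle moves with unit speed along arcs of counterclockwise circles of radius $1/\beta$ (Larmor arcs) and reflects at $\gamma$ by the law of geometric optics. The $\delta$-Gutkin property means every Larmor arc entering $\Omega$ making angle $\delta$ with $\gamma$ exits $\Omega$ making angle $\delta$ with $\gamma$. Writing $\varphi_1=\bar\varphi-d(\bar\varphi)$, $\varphi_2=\bar\varphi+d(\bar\varphi)$, one has $\bar\varphi=(\varphi_1+\varphi_2)/2$, $d=(\varphi_2-\varphi_1)/2$. *)

From Stdlib Require Import Reals Lra.
From Coquelicot Require Import Coquelicot.
Open Scope R_scope.

(* R^2 is identified with C: a point x + i y is the pair (x, y),
   e^{i t} is (cos t, sin t). *)

(* Larmor arc of radius 1/beta, traversed counterclockwise with unit speed,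
   with centre (cx, cy), whose velocity at arclength s = 0 is e^{i th0}.
   Its position at arclength s is  c - (i/beta) e^{i (th0 + beta s)},
   so its velocity at arclength s is e^{i (th0 + beta s)}. *)
Definition larmor_x (beta cx th0 s : R) : R := cx + / beta * sin (th0 + beta * s).
Definition larmor_y (beta cy th0 s : R) : R := cy - / beta * cos (th0 + beta * s).

(* The tangent angle of gamma is phi, so (gx, gy) is a primitive of rho e^{i phi} and the
   integral is the chord gamma(phib + d) - gamma(phib - d).  This chord is also the chord
   of the Larmor arc, whose endpoint velocities e^{i (phib + (delta + d))} and, up to a
   full turn, e^{i (phib - (delta + d))} are symmetric about e^{i phib}; since a Larmor
   arc's position is c - (i/beta) e^{i theta}, the chord is
   (i/beta) (e^{i (phib + a)} - e^{i (phib - a)}) = (2/beta) sin a e^{i phib}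
   with a = delta + d. *)
From Stdlib Require Import Reals Lra.
From Coquelicot Require Import Coquelicot.
Open Scope R_scope.

Lemma RInt_derive_continuous (f g : R -> R) (a b : R) :
  (forall x, is_derive g x (f x)) -> (forall x, continuous f x) ->
  RInt f a b = g b - g a.
Proof.
  intros hg hf.
  apply is_RInt_unique, (is_RInt_derive g); intros x _; [apply hg | apply hf].
Qed.

Lemma continuous_mult_cos (f : R -> R) (x : R) :
  continuous f x -> continuous (fun t => f t * cos t) x.
Proof.
  intros hf; apply (continuous_mult f cos); [exact hf|].
  apply continuity_pt_filterlim, continuity_cos.
Qed.

Lemma continuous_mult_sin (f : R -> R) (x : R) :
  continuous f x -> continuous (fun t => f t * sin t) x.
Proof.
  intros hf; apply (continuous_mult f sin); [exact hf|].
  apply continuity_pt_filterlim, continuity_sin.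
Qed.

Lemma larmor_x_full_turn (beta cx th0 th1 s : R) :
  th0 + beta * s = th1 + 2 * PI -> larmor_x beta cx th0 s = larmor_x beta cx th1 0.
Proof.
  intros hturn; unfold larmor_x.
  rewrite hturn, Rmult_0_r, Rplus_0_r.
  replace (th1 + 2 * PI) with (th1 + 2 * INR 1 * PI) by (simpl; ring).
  now rewrite sin_period.
Qed.

Lemma larmor_y_full_turn (beta cy th0 th1 s : R) :
  th0 + beta * s = th1 + 2 * PI -> larmor_y beta cy th0 s = larmor_y beta cy th1 0.
Proof.
  intros hturn; unfold larmor_y.
  rewrite hturn, Rmult_0_r, Rplus_0_r.
  replace (th1 + 2 * PI) with (th1 + 2 * INR 1 * PI) by (simpl; ring).
  now rewrite cos_period.
Qed.

Lemma larmor_x_chord (beta cx phi a : R) :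
  larmor_x beta cx (phi + a) 0 - larmor_x beta cx (phi - a) 0 = 2 / beta * sin a * cos phi.
Proof.
  unfold larmor_x, Rdiv.
  rewrite !Rmult_0_r, !Rplus_0_r, sin_plus, sin_minus.
  ring.
Qed.

Lemma larmor_y_chord (beta cy phi a : R) :
  larmor_y beta cy (phi + a) 0 - larmor_y beta cy (phi - a) 0 = 2 / beta * sin a * sin phi.
Proof.
  unfold larmor_y, Rdiv.
  rewrite !Rmult_0_r, !Rplus_0_r, cos_plus, cos_minus.
  ring.
Qed.

Theorem proposition3p3
  (beta delta : R) (gx gy rho d : R -> R)
  (hbeta : 0 < beta)
  (hrho : forall phi, continuous rho phi)
  (hgx : forall phi, is_derive gx phi (rho phi * cos phi))
  (hgy : forall phi, is_derive gy phi (rho phi * sin phi))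
  (harc : forall phib,
     exists (cx cy L : R),
       0 <= L /\
       phib + d phib + delta + beta * L = phib - d phib + 2 * PI - delta /\
       larmor_x beta cx (phib + d phib + delta) 0 = gx (phib + d phib) /\
       larmor_y beta cy (phib + d phib + delta) 0 = gy (phib + d phib) /\
       larmor_x beta cx (phib + d phib + delta) L = gx (phib - d phib) /\
       larmor_y beta cy (phib + d phib + delta) L = gy (phib - d phib)) :
  forall phib,
    RInt (fun xi => rho xi * cos xi) (phib - d phib) (phib + d phib)
      = 2 / beta * sin (delta + d phib) * cos phib /\
    RInt (fun xi => rho xi * sin xi) (phib - d phib) (phib + d phib)
      = 2 / beta * sin (delta + d phib) * sin phib.
Proof.
  intros phib.
  destruct (harc phib) as (cx & cy & L & _ & hturn & hx0 & hy0 & hxL & hyL).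
  set (a := delta + d phib).
  replace (phib + d phib + delta) with (phib + a) in * by (unfold a; ring).
  assert (hturn' : phib + a + beta * L = (phib - a) + 2 * PI) by (unfold a in *; lra).
  rewrite (larmor_x_full_turn _ _ _ _ _ hturn') in hxL.
  rewrite (larmor_y_full_turn _ _ _ _ _ hturn') in hyL.
  rewrite (RInt_derive_continuous _ gx), (RInt_derive_continuous _ gy)
    by auto using continuous_mult_cos, continuous_mult_sin.
  rewrite <- hx0, <- hy0, <- hxL, <- hyL.
  split; [apply larmor_x_chord | apply larmor_y_chord].
Qed.
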